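(* Let $P,Q,R_0,R_1$ be integers with $P>0$, $Q<0$, $R_0,R_1$ positive, and $\gcd(P,Q)=\gcd(R_1,Q)=1$. Let $R_{n+2}=PR_{n+1}-QR_n$ ($n\ge0$) and let $\alpha,\beta$ be the roots of $x^2-Px+Q$ with $|\alpha|\ge|\beta|$. Then \[R_m\ge(R_1+R_0|\beta|)\,\alpha^{m-2}\quad\text{for all } m\ge2.\] *)

From Stdlib Require Export Reals ZArith Lra Lia.

(* With alpha + beta = P and alpha beta = Q < 0 the larger root alpha is
   positive and beta is negative.  The recurrence gives
   R_(n+1) - beta R_n = alpha^n (R_1 - beta R_0) = alpha^n (R_1 + R_0 |beta|),
   and since beta R_n < 0 this bounds R_(n+1) above by alpha^n S_0.  Hence
   R_(n+2) = alpha^(n+1) S_0 + beta R_(n+1) >= (alpha + beta) alpha^n S_0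
   = P alpha^n S_0 >= alpha^n S_0. *)
Open Scope R_scope.

Lemma quadratic_vieta (p q a b : R) :
  (forall x : R, x ^ 2 - p * x + q = (x - a) * (x - b)) -> p = a + b /\ q = a * b.
Proof.
  intros hfact.
  pose proof (hfact 0) as h0; pose proof (hfact 1) as h1; simpl in h0, h1.
  split; nra.
Qed.

Lemma roots_opposite_signs (a b : R) :
  a * b < 0 -> 0 < a + b -> Rabs a >= Rabs b -> 0 < a /\ b < 0.
Proof.
  intros hprod hsum habs.
  destruct (Rlt_or_le 0 a) as [ha | ha]; [split; nra |].
  assert (ha' : a < 0) by nra.
  assert (hb : 0 < b) by nra.
  rewrite (Rabs_left a ha'), (Rabs_right b) in habs; lra.
Qed.

Section SecondOrderRecurrence.

Variables (alpha beta : R) (r : nat -> R).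
Hypothesis r_rec :
  forall n, r (S (S n)) = (alpha + beta) * r (S n) - alpha * beta * r n.

Lemma rec_sub_beta_geometric n :
  r (S n) - beta * r n = alpha ^ n * (r 1 - beta * r 0).
Proof.
  induction n as [| n IH]; simpl; [ring |].
  rewrite r_rec.
  transitivity (alpha * (r (S n) - beta * r n)); [ring | rewrite IH; ring].
Qed.

Hypotheses (alpha_pos : 0 < alpha) (beta_neg : beta < 0)
  (sum_ge1 : 1 <= alpha + beta) (r0_pos : 0 < r 0) (r1_pos : 0 < r 1).

Lemma rec_pos n : 0 < r n.
Proof.
  assert (hpair : 0 < r n /\ 0 < r (S n)).
  { induction n as [| n [IH1 IH2]]; [auto |].
    split; [exact IH2 |].
    rewrite r_rec.
    assert (0 < (alpha + beta) * r (S n)) by nra.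
    assert (alpha * beta * r n < 0) by (apply Rmult_neg_pos; nra).
    lra. }
  exact (proj1 hpair).
Qed.

Lemma rec_lower_bound n : alpha ^ n * (r 1 - beta * r 0) <= r (S (S n)).
Proof.
  set (s := alpha ^ n * (r 1 - beta * r 0)).
  assert (hs : 0 <= s).
  { apply Rmult_le_pos; [apply pow_le; lra | nra]. }
  assert (hnext : r (S (S n)) - beta * r (S n) = alpha * s).
  { rewrite rec_sub_beta_geometric; unfold s; simpl; ring. }
  assert (hcur : r (S n) - beta * r n = s) by apply rec_sub_beta_geometric.
  assert (hup : r (S n) <= s) by (pose proof (rec_pos n); nra).
  assert (beta * r (S n) >= beta * s) by nra.
  nra.
Qed.

End SecondOrderRecurrence.

Theorem lemma11 (P Q : Z) (Rs : nat -> Z) (alpha beta : R)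
  (hP : (0 < P)%Z) (hQ : (Q < 0)%Z)
  (hR0 : (0 < Rs 0%nat)%Z) (hR1 : (0 < Rs 1%nat)%Z)
  (hgPQ : Z.gcd P Q = 1%Z) (hgR1Q : Z.gcd (Rs 1%nat) Q = 1%Z)
  (hrec : forall n : nat, Rs (S (S n)) = (P * Rs (S n) - Q * Rs n)%Z)
  (hroots : forall x : R, x ^ 2 - IZR P * x + IZR Q = (x - alpha) * (x - beta))
  (habs : Rabs alpha >= Rabs beta) :
  forall m : nat, (2 <= m)%nat ->
    IZR (Rs m) >= (IZR (Rs 1%nat) + IZR (Rs 0%nat) * Rabs beta) * alpha ^ (m - 2).
Proof.
  destruct (quadratic_vieta _ _ _ _ hroots) as [hsum hprod].
  assert (hP1 : 1 <= alpha + beta) by (rewrite <- hsum; apply IZR_le; lia).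
  assert (hQ0 : alpha * beta < 0) by (rewrite <- hprod; apply IZR_lt; exact hQ).
  destruct (roots_opposite_signs alpha beta hQ0 ltac:(lra) habs) as [ha hb].
  assert (hrecR : forall n, IZR (Rs (S (S n)))
            = (alpha + beta) * IZR (Rs (S n)) - alpha * beta * IZR (Rs n)).
  { intros n; rewrite hrec, minus_IZR, !mult_IZR, hsum, hprod; reflexivity. }
  intros m hm.
  destruct m as [| [| k]]; [lia | lia |].
  replace (S (S k) - 2)%nat with k by lia.
  rewrite (Rabs_left beta hb).
  pose proof (rec_lower_bound alpha beta (fun n => IZR (Rs n)) hrecR ha hb hP1
                (IZR_lt _ _ hR0) (IZR_lt _ _ hR1) k) as hbound.
  simpl in hbound; lra.
Qed.
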